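(* Let $\mathcal A$ be a unital algebra with unit $\mathbf 1$ and $(\mathbf R_n)_{n\in\mathbb Z}$ invertible elements satisfying, for all $n\in\mathbb Z$, $$\mathbf R_{2n}\mathbf R_{2n-1}^{-1}\mathbf R_{2n-2}\mathbf R_{2n-1}=\mathbf 1+\mathbf R_{2n-1},\qquad \mathbf R_{2n+1}\mathbf R_{2n}^{-1}\mathbf R_{2n-1}\mathbf R_{2n}=\mathbf 1+\mathbf R_{2n}^4 .$$ Then for all $n,i\in\mathbb Z$, $\mathbf R_n$ is a positive Laurent polynomial of the initial data $\mathbf x_i=(\mathbf R_i,\mathbf R_{i+1})$: there is a finite sum, with non-negative integer coefficients, of words in $X^{\pm1},Y^{\pm1}$ (depending only on $n,i$, not on $\mathcal A$ or the particular solution) which evaluates to $\mathbf R_n$ at $X=\mathbf R_i$, $Y=\mathbf R_{i+1}$. *)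

From HB Require Import structures.
From mathcomp Require Import all_boot all_order all_algebra.
Set Implicit Arguments. Unset Strict Implicit. Unset Printing Implicit Defensive.
Import Order.TTheory GRing.Theory Num.Theory.

Inductive letter := LX | LXinv | LY | LYinv.

Definition word := seq letter.

(* A positive noncommutative Laurent polynomial in X, Y: a finite formal sum
   of words, each with a non-negative integer coefficient. *)
Definition posLaurent := seq (nat * word).

Section Eval.
Variable A : unitRingType.

Definition eval_letter (x y : A) (l : letter) : A :=
  match l with
  | LX => x | LXinv => x^-1 | LY => y | LYinv => y^-1
  end.

Definition eval_word (x y : A) (w : word) : A :=
  (\prod_(l <- w) eval_letter x y l)%R.

Definition eval_posLaurent (x y : A) (P : posLaurent) : A :=
  (\sum_(c <- P) eval_word x y c.2 *+ c.1)%R.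
End Eval.

From HB Require Import structures.
From mathcomp Require Import all_boot all_order all_algebra zify.
Import GRing.Theory.
Local Open Scope ring_scope.

(* The quantity [Q = R_k R_(k+1)^-1 R_k^-1 R_(k+1)] does not depend on [k], and
   the even terms satisfy two linear recurrences with constant coefficients,
   [R_(2n+4) = R_(2n+2) W - R_(2n) Q] and [R_(2n+4) = Q^-1 V R_(2n+2) - Q^-1 R_(2n)],
   while [R_(2n+1) = R_(2n+2) Q^-1 R_(2n) - 1].  Split [W = a + d] and
   [V = a' + d'] into positive Laurent polynomials such that [a d - Q],
   [d' a' - Q^-1] and [d Q^-1 a' - Q^-1] are positive as well; then
   [R_(2n)], [R_(2n+2) - R_(2n) a], [R_(2n+2) - a' R_(2n)] and
   [(R_(2n+2) - R_(2n) a) Q^-1 R_(2n) - 1] stay positive along the recursion.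
   Such splittings exist for the initial data [(R_0, R_1)] and [(R_-1, R_0)],
   which gives all [R_n] with [n >= 0]; negative [n] follow by reading the
   system backwards in the opposite ring, other initial positions by the
   shift [n -> n + 2]. *)

(** * Normalisation in unit rings *)

(* Reflexive normalisation in a unit ring, for expressions built from atoms
   and inverses of unit atoms.  A letter [(i, k)] of a monomial stands for
   the plain atom [i] ([k = 0]), the unit atom [i] ([k = 1]) or its inverse
   ([k = 2]); adjacent [u u^-1] and [u^-1 u] cancel. *)
Inductive ncexpr :=
  | NCunit of nat | NCunitInv of nat | NCatom of nat | NC1 | NC0
  | NCadd of ncexpr & ncexpr | NCmul of ncexpr & ncexpr | NCopp of ncexpr.

Definition ncmon := seq (nat * nat).
Definition ncpoly := seq (int * ncmon).

Definition nc_cancels (l l' : nat * nat) : bool :=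
  (l.1 == l'.1) && (((l.2 == 1) && (l'.2 == 2)) || ((l.2 == 2) && (l'.2 == 1)))%N.

Fixpoint ncmon_reduce (m : ncmon) : ncmon :=
  match m with
  | [::] => [::]
  | l :: m' =>
      match ncmon_reduce m' with
      | l' :: r => if nc_cancels l l' then r else l :: l' :: r
      | [::] => [:: l]
      end
  end.

Fixpoint ncpoly_mul (p1 p2 : ncpoly) : ncpoly :=
  match p1 with
  | [::] => [::]
  | c :: p => [seq (c.1 * c2.1, ncmon_reduce (c.2 ++ c2.2)) | c2 <- p2]
              ++ ncpoly_mul p p2
  end.

Fixpoint ncnorm (t : ncexpr) : ncpoly :=
  match t with
  | NCunit i => [:: (1, [:: (i, 1%N)])]
  | NCunitInv i => [:: (1, [:: (i, 2%N)])]
  | NCatom i => [:: (1, [:: (i, 0%N)])]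
  | NC1 => [:: (1, [::])]
  | NC0 => [::]
  | NCadd t1 t2 => ncnorm t1 ++ ncnorm t2
  | NCmul t1 t2 => ncpoly_mul (ncnorm t1) (ncnorm t2)
  | NCopp t1 => [seq (- c.1, c.2) | c <- ncnorm t1]
  end.

Fixpoint ncpoly_insert (c : int * ncmon) (p : ncpoly) : ncpoly :=
  match p with
  | [::] => [:: c]
  | c' :: p' => if c'.2 == c.2 then (c'.1 + c.1, c'.2) :: p'
                else c' :: ncpoly_insert c p'
  end.

Definition ncpoly_is0 (p : ncpoly) : bool :=
  all (fun c => c.1 == 0) (foldr ncpoly_insert [::] p).

Section NCEval.
Variables (A : unitRingType) (units atoms : seq A).
Hypothesis units_unit : all (fun x => x \is a GRing.unit) units.

Definition ncletter_eval (l : nat * nat) : A :=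
  match l.2 with
  | 0 => nth 0 atoms l.1
  | 1 => nth 1 units l.1
  | _ => (nth 1 units l.1)^-1
  end.
Definition ncmon_eval (m : ncmon) : A := \prod_(l <- m) ncletter_eval l.
Definition ncpoly_eval (p : ncpoly) : A := \sum_(c <- p) ncmon_eval c.2 *~ c.1.

Fixpoint ncexpr_eval (t : ncexpr) : A :=
  match t with
  | NCunit i => nth 1 units i
  | NCunitInv i => (nth 1 units i)^-1
  | NCatom i => nth 0 atoms i
  | NC1 => 1
  | NC0 => 0
  | NCadd t1 t2 => ncexpr_eval t1 + ncexpr_eval t2
  | NCmul t1 t2 => ncexpr_eval t1 * ncexpr_eval t2
  | NCopp t1 => - ncexpr_eval t1
  end.

Lemma nth_units_unit i : nth 1 units i \is a GRing.unit.
Proof.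
have [ltis|leis] := ltnP i (size units); last by rewrite nth_default ?unitr1.
by apply: (allP units_unit); rewrite mem_nth.
Qed.

Lemma ncmon_eval_cons l m : ncmon_eval (l :: m) = ncletter_eval l * ncmon_eval m.
Proof. by rewrite /ncmon_eval big_cons. Qed.

Lemma ncmon_eval_cat m1 m2 : ncmon_eval (m1 ++ m2) = ncmon_eval m1 * ncmon_eval m2.
Proof. by rewrite /ncmon_eval big_cat. Qed.

Lemma nc_cancelsP l l' : nc_cancels l l' -> ncletter_eval l * ncletter_eval l' = 1.
Proof.
case: l l' => i k [j k'] /andP[/= /eqP <-].
by case/orP=> /andP[/eqP -> /eqP ->];
  rewrite /ncletter_eval /= ?mulVr ?mulrV ?nth_units_unit.
Qed.

Lemma ncmon_eval_reduce m : ncmon_eval (ncmon_reduce m) = ncmon_eval m.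
Proof.
elim: m => //= l m IHm; rewrite [RHS]ncmon_eval_cons -IHm.
case: (ncmon_reduce m) => [|l' r]; first by rewrite ncmon_eval_cons.
case: ifP => [/nc_cancelsP cll'|_]; last by rewrite ncmon_eval_cons.
by rewrite ncmon_eval_cons mulrA cll' mul1r.
Qed.

Lemma ncpoly_eval_cons c p :
  ncpoly_eval (c :: p) = ncmon_eval c.2 *~ c.1 + ncpoly_eval p.
Proof. by rewrite /ncpoly_eval big_cons. Qed.

Lemma ncpoly_eval_cat p1 p2 :
  ncpoly_eval (p1 ++ p2) = ncpoly_eval p1 + ncpoly_eval p2.
Proof. by rewrite /ncpoly_eval big_cat. Qed.

Lemma ncpoly_eval_mul p1 p2 :
  ncpoly_eval (ncpoly_mul p1 p2) = ncpoly_eval p1 * ncpoly_eval p2.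
Proof.
elim: p1 => [|c p IHp] /=; first by rewrite /ncpoly_eval big_nil mul0r.
rewrite ncpoly_eval_cat IHp ncpoly_eval_cons mulrDl; congr (_ + _); clear IHp.
elim: p2 => [|c2 p2 IHp2] /=; first by rewrite /ncpoly_eval big_nil mulr0.
rewrite !ncpoly_eval_cons IHp2 mulrDr; congr (_ + _).
by rewrite ncmon_eval_reduce ncmon_eval_cat mulrzAl mulrzAr -mulrzA mulrC.
Qed.

Lemma ncnorm_eval t : ncpoly_eval (ncnorm t) = ncexpr_eval t.
Proof.
elim: t => [i|i|i|||t1 IH1 t2 IH2|t1 IH1 t2 IH2|t1 IH1] /=;
  rewrite ?ncpoly_eval_cons ?ncpoly_eval_cat ?ncpoly_eval_mul ?IH1 ?IH2 //;
  rewrite /ncpoly_eval ?big_nil ?big_cons ?addr0 //=.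
- by rewrite /ncmon_eval big_seq1.
- by rewrite /ncmon_eval big_seq1.
- by rewrite /ncmon_eval big_seq1.
- by rewrite /ncmon_eval big_nil.
- rewrite -IH1 /ncpoly_eval big_map -sumrN.
  by apply: eq_bigr => c _; rewrite mulrNz.
Qed.

Lemma ncpoly_eval_insert c p :
  ncpoly_eval (ncpoly_insert c p) = ncmon_eval c.2 *~ c.1 + ncpoly_eval p.
Proof.
elim: p => [|c' p IHp] /=; first by rewrite ncpoly_eval_cons.
case: eqP => [<-|_]; rewrite !ncpoly_eval_cons /=; last by rewrite IHp addrCA.
by rewrite mulrzDr addrCA addrA.
Qed.

Lemma ncpoly_is0_eval p : ncpoly_is0 p -> ncpoly_eval p = 0.
Proof.
have -> : ncpoly_eval p = ncpoly_eval (foldr ncpoly_insert [::] p).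
  by elim: p => //= c p IHp; rewrite ncpoly_eval_insert ncpoly_eval_cons IHp.
rewrite /ncpoly_is0; elim: (foldr _ _ p) => [|c q IHq] /=.
  by rewrite /ncpoly_eval big_nil.
by case/andP=> /eqP c0 /IHq q0; rewrite ncpoly_eval_cons c0 mulr0z q0 addr0.
Qed.

Lemma ncexpr_eval_eq t1 t2 :
  ncpoly_is0 (ncnorm (NCadd t1 (NCopp t2))) -> ncexpr_eval t1 = ncexpr_eval t2.
Proof. by move/ncpoly_is0_eval/eqP; rewrite ncnorm_eval subr_eq0 => /eqP. Qed.
End NCEval.

Ltac nc_add_atom x l :=
  lazymatch l with
  | context [ cons x _ ] => l
  | _ => constr:(cons x l)
  end.

Ltac nc_index x l :=
  lazymatch l with
  | cons x _ => constr:(0%N)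
  | cons _ ?l' => let n := nc_index x l' in constr:(S n)
  end.

Ltac nc_unit_atoms t l :=
  lazymatch t with
  | @Algebra.add _ ?x ?y => let l := nc_unit_atoms x l in nc_unit_atoms y l
  | @GRing.mul _ ?x ?y => let l := nc_unit_atoms x l in nc_unit_atoms y l
  | @Algebra.opp _ ?x => nc_unit_atoms x l
  | @GRing.inv _ ?x => nc_add_atom x l
  | @GRing.exp _ ?x _ => nc_unit_atoms x l
  | @Algebra.natmul _ ?x _ => nc_unit_atoms x l
  | _ => l
  end.

Ltac nc_plain_atoms t u l :=
  lazymatch t with
  | @Algebra.add _ ?x ?y => let l := nc_plain_atoms x u l in nc_plain_atoms y u l
  | @GRing.mul _ ?x ?y => let l := nc_plain_atoms x u l in nc_plain_atoms y u l
  | @Algebra.opp _ ?x => nc_plain_atoms x u l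
  | @GRing.inv _ ?x => l
  | @GRing.one _ => l
  | @Algebra.zero _ => l
  | @GRing.exp _ ?x _ => nc_plain_atoms x u l
  | @Algebra.natmul _ ?x _ => nc_plain_atoms x u l
  | _ => lazymatch u with
         | context [ cons t _ ] => l
         | _ => nc_add_atom t l
         end
  end.

Ltac nc_reify_atom t u p :=
  lazymatch u with
  | context [ cons t _ ] => let i := nc_index t u in constr:(NCunit i)
  | _ => let i := nc_index t p in constr:(NCatom i)
  end.

Ltac nc_reify_exp x n u p :=
  lazymatch n with
  | O => constr:(NC1)
  | S O => nc_reify_atom x u p
  | S ?m => let a := nc_reify_atom x u p in
            let r := nc_reify_exp x m u p in constr:(NCmul a r)
  end.

Ltac nc_reify_natmul x n u p :=
  lazymatch n with
  | O => constr:(NC0)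
  | S O => nc_reify x u p
  | S ?m => let a := nc_reify x u p in
            let r := nc_reify_natmul x m u p in constr:(NCadd a r)
  end
with nc_reify t u p :=
  lazymatch t with
  | @Algebra.add _ ?x ?y =>
      let a := nc_reify x u p in let b := nc_reify y u p in constr:(NCadd a b)
  | @GRing.mul _ ?x ?y =>
      let a := nc_reify x u p in let b := nc_reify y u p in constr:(NCmul a b)
  | @Algebra.opp _ ?x => let a := nc_reify x u p in constr:(NCopp a)
  | @GRing.inv _ ?x => let i := nc_index x u in constr:(NCunitInv i)
  | @GRing.one _ => constr:(NC1)
  | @Algebra.zero _ => constr:(NC0)
  | @GRing.exp _ ?x ?n => nc_reify_exp x n u p
  | @Algebra.natmul _ ?x ?n => nc_reify_natmul x n u p
  | _ => nc_reify_atom t u p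
  end.

(* Proves an identity that holds formally once adjacent [u * u^-1] and
   [u^-1 * u] are cancelled; every inverted atom [u] must be a unit by an
   assumption in the context. *)
Ltac nc_ring :=
  lazymatch goal with
  | |- @eq ?T ?X ?Y =>
    let l0 := constr:(@nil T) in
    let u := nc_unit_atoms X l0 in
    let u := nc_unit_atoms Y u in
    let p := nc_plain_atoms X u l0 in
    let p := nc_plain_atoms Y u p in
    let tX := nc_reify X u p in
    let tY := nc_reify Y u p in
    apply: (@ncexpr_eval_eq _ u p _ tX tY);
    [ rewrite /=; do ? (apply/andP; split); done | by vm_compute ]
  end.

Lemma int_succ_const {T : Type} (f : int -> T) :
  (forall n, f (n + 1) = f n) -> forall n, f n = f 0.
Proof.
move=> fS; elim/int_ind => [//|k IHk|k IHk].
  by rewrite -IHk -(fS k); congr f; lia.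
by rewrite -IHk -(fS (- k.+1%:Z)); congr f; lia.
Qed.

(** * Exchange relations *)

Section Exchange.
Context {A : unitRingType}.
Implicit Types a b c f : A.

Definition qcomm a b := a * b^-1 * a^-1 * b.

Lemma qcomm_unit [a b] : a \is a GRing.unit -> b \is a GRing.unit ->
  qcomm a b \is a GRing.unit.
Proof. by move=> ua ub; rewrite !unitrMl ?unitrV. Qed.

Lemma invr_qcomm a b : a \is a GRing.unit -> b \is a GRing.unit ->
  (qcomm a b)^-1 = b^-1 * a * b * a^-1.
Proof.
move=> ua ub; have uq := qcomm_unit ua ub; apply: (mulrI uq).
by rewrite mulrV // /qcomm; nc_ring.
Qed.

Lemma exchange_next [a b c f] : a \is a GRing.unit -> b \is a GRing.unit ->
  c * b^-1 * a * b = f -> c = f * a^-1 * qcomm a b.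
Proof. by move=> ua ub <-; rewrite /qcomm; nc_ring. Qed.

Lemma exchange_prev [a b c f] : b \is a GRing.unit -> c \is a GRing.unit ->
  GRing.comm f b -> c * b^-1 * a * b = f -> a = qcomm b c * c^-1 * f.
Proof.
move=> ub uc fb exch; have fVb : b^-1 * f = f * b^-1 by rewrite (commrV fb).
transitivity (b * c^-1 * (b^-1 * f)); last by rewrite /qcomm; nc_ring.
by rewrite fVb -exch; nc_ring.
Qed.

Lemma exchange_rev [a b c f] : b \is a GRing.unit -> GRing.comm f b ->
  c * b^-1 * a * b = f -> b * c * b^-1 * a = f.
Proof.
move=> ub fb exch; transitivity (b * (c * b^-1 * a * b) * b^-1); first by nc_ring.
by rewrite exch -fb mulrK.
Qed.

(* [f] commuting with [b] is what makes [qcomm] a conserved quantity. *)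
Lemma qcomm_exchange [a b c f] : a \is a GRing.unit -> b \is a GRing.unit ->
  c \is a GRing.unit -> GRing.comm f b -> c * b^-1 * a * b = f ->
  qcomm b c = qcomm a b.
Proof.
move=> ua ub uc fb exch.
have uf : f \is a GRing.unit by rewrite -exch !unitrMl ?unitrV.
have fVbf : f^-1 * b^-1 * f = b^-1.
  by rewrite -mulrA -(commrV fb) mulrA mulVr ?mul1r.
have cV : c^-1 = b^-1 * a * b * f^-1.
  by apply: (mulIr uf); rewrite divrK // -exch; nc_ring.
rewrite /qcomm cV (exchange_next ua ub exch) /qcomm.
transitivity (a * b * (f^-1 * b^-1 * f) * b^-1 * a^-1 * b); first by nc_ring.
by rewrite fVbf; nc_ring.
Qed.

Lemma exchange_mid [a b c] : a \is a GRing.unit -> b \is a GRing.unit ->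
  c * b^-1 * a * b = 1 + b -> b = c * (qcomm a b)^-1 * a - 1.
Proof.
move=> ua ub exch; rewrite invr_qcomm //.
transitivity (c * b^-1 * a * b - 1); last by nc_ring.
by rewrite exch; nc_ring.
Qed.

(* The coefficients [W] and [V] of the two recurrences of the even terms,
   computed from three consecutive terms. *)
Definition Wcoef (x0 y0 x1 q : A) := x1 * y0^-1 * x1 + y0^-1 * x0 * x0 * q.
Definition Vcoef (x0 y0 x1 q : A) := x0 * y0^-1 * x0 + q * x1 * x1 * y0^-1.

(* Five consecutive terms [x0, y0, x1, y1, x2], each outer one expressed
   through its neighbours and the conserved quantity [q]. *)
Section Window.
Variables x0 y0 x1 y1 x2 q : A.
Hypotheses (ux1 : x1 \is a GRing.unit) (uy0 : y0 \is a GRing.unit)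
  (uy1 : y1 \is a GRing.unit).
Hypotheses (hx2 : x2 = (1 + y1) * x1^-1 * q) (hx0 : x0 = q * x1^-1 * (1 + y0))
  (hy1 : y1 = (1 + x1 ^+ 4) * y0^-1 * q) (hy0 : y0 = q * y1^-1 * (1 + x1 ^+ 4))
  (hq0 : q = qcomm y0 x1) (hq1 : q = qcomm x1 y1).

Let mulr_Wcoef_prev : x1 * Wcoef x0 y0 x1 q = x2 + x0 * q.
Proof. by rewrite /Wcoef hx2 hy1 hx0 hq0 /qcomm; nc_ring. Qed.

Let mulr_Wcoef_next : x1 * Wcoef x1 y1 x2 q = x2 + x0 * q.
Proof. by rewrite /Wcoef hx2 hx0 hy0 hq1 /qcomm; nc_ring. Qed.

Let mulr_Vcoef_prev : Vcoef x0 y0 x1 q * x1 = x0 + q * x2.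
Proof. by rewrite /Vcoef hx2 hy1 hx0 hq0 /qcomm; nc_ring. Qed.

Let mulr_Vcoef_next : Vcoef x1 y1 x2 q * x1 = x0 + q * x2.
Proof. by rewrite /Vcoef hx2 hx0 hy0 hq1 /qcomm; nc_ring. Qed.

Lemma Wcoef_step : Wcoef x1 y1 x2 q = Wcoef x0 y0 x1 q.
Proof. by apply: (mulrI ux1); rewrite mulr_Wcoef_next mulr_Wcoef_prev. Qed.

Lemma Vcoef_step : Vcoef x1 y1 x2 q = Vcoef x0 y0 x1 q.
Proof. by apply: (mulIr ux1); rewrite mulr_Vcoef_next mulr_Vcoef_prev. Qed.

Lemma window_right_rec : x2 = x1 * Wcoef x0 y0 x1 q - x0 * q.
Proof. by rewrite mulr_Wcoef_prev addrK. Qed.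

Lemma window_left_rec : x2 = q^-1 * Vcoef x0 y0 x1 q * x1 - q^-1 * x0.
Proof.
have uq : q \is a GRing.unit by rewrite hq0 qcomm_unit.
by rewrite -mulrA mulr_Vcoef_prev mulrDr addrC addKr mulKr.
Qed.
End Window.
End Exchange.

(** * Positive Laurent polynomials *)

Definition padd (P1 P2 : posLaurent) : posLaurent := P1 ++ P2.
Definition pmul (P1 P2 : posLaurent) : posLaurent :=
  [seq ((c1.1 * c2.1)%N, c1.2 ++ c2.2) | c1 <- P1, c2 <- P2].

Definition mirror_letter (l : letter) : letter :=
  match l with LX => LY | LXinv => LYinv | LY => LX | LYinv => LXinv end.
Definition mirror (P : posLaurent) : posLaurent :=
  [seq (c.1, rev (map mirror_letter c.2)) | c <- P].

Section PosLaurentEval.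
Variables (A : unitRingType) (x y : A).
Local Notation ev := (eval_posLaurent x y).

Lemma eval_word_cat w1 w2 : eval_word x y (w1 ++ w2) = eval_word x y w1 * eval_word x y w2.
Proof. by rewrite /eval_word big_cat. Qed.

Lemma eval_posLaurentD P1 P2 : ev (padd P1 P2) = ev P1 + ev P2.
Proof. by rewrite /eval_posLaurent big_cat. Qed.

Lemma eval_posLaurentM P1 P2 : ev (pmul P1 P2) = ev P1 * ev P2.
Proof.
rewrite /eval_posLaurent /pmul big_allpairs_dep mulr_suml; apply: eq_bigr => c1 _.
rewrite mulr_sumr; apply: eq_bigr => c2 _ /=.
by rewrite eval_word_cat mulrnAl mulrnAr -mulrnA mulnC.
Qed.

Lemma eval_posLaurent_conv P :
  eval_posLaurent (x : A^c) (y : A^c) P = eval_posLaurent y x (mirror P).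
Proof.
rewrite /eval_posLaurent big_map; apply: eq_bigr => c _ /=; congr (_ *+ _).
by rewrite /eval_word rev_prodr -map_rev big_map; apply: eq_bigr => -[].
Qed.
End PosLaurentEval.

Record certificate := Certificate {
  cert_a : posLaurent; cert_d : posLaurent; cert_c : posLaurent;
  cert_a' : posLaurent; cert_d' : posLaurent; cert_c' : posLaurent;
  cert_g : posLaurent; cert_qinv : posLaurent;
  cert_y0 : posLaurent; cert_z0 : posLaurent; cert_z0' : posLaurent;
  cert_e0 : posLaurent }.

Record pstate := PState {
  st_y : posLaurent; st_z : posLaurent; st_z' : posLaurent; st_e : posLaurent }.

Section Certificate.
Variable C : certificate.
Local Notation a := (cert_a C).
Local Notation d := (cert_d C).
Local Notation c := (cert_c C).
Local Notation a' := (cert_a' C).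
Local Notation d' := (cert_d' C).
Local Notation c' := (cert_c' C).
Local Notation g := (cert_g C).
Local Notation qi := (cert_qinv C).

Fixpoint cert_state (n : nat) : pstate :=
  match n with
  | 0 => PState (cert_y0 C) (cert_z0 C) (cert_z0' C) (cert_e0 C)
  | m.+1 =>
      let: PState y z z' e := cert_state m in
      PState (padd (pmul y a) z)
             (padd (pmul y c) (pmul z d))
             (padd (pmul c' y) (pmul d' z'))
             (padd (padd (pmul (pmul y (pmul (pmul c qi) a')) y)
                         (pmul (pmul y (pmul c qi)) z'))
                   (padd (padd (pmul (pmul z g) y) (pmul (pmul z (pmul d qi)) z')) e))
  end.

Definition cert_even (n : nat) : posLaurent := st_y (cert_state n).

Definition cert_odd (n : nat) : posLaurent :=
  let s := cert_state n in padd (pmul (pmul (st_y s) (pmul a qi)) (st_y s)) (st_e s).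

(* [Y] obeys a right and a left linear recurrence; with [Z n = Y (n+1) - Y n a]
   and [Z' n = Y (n+1) - a' Y n], the quantities [Y], [Z], [Z'] and
   [Z Q^-1 Y - 1] are updated by sums of products of positive terms. *)
Section CertificateEval.
Context {A : unitRingType} (Y : nat -> A) {x y Q W V : A}.
Local Notation ev := (eval_posLaurent x y).
Hypothesis Q_unit : Q \is a GRing.unit.
Hypotheses (Y_right : forall n, Y n.+2 = Y n.+1 * W - Y n * Q)
  (Y_left : forall n, Y n.+2 = V * Y n.+1 - Q^-1 * Y n).
Hypotheses (ev_qi : ev qi = Q^-1) (ev_W : W = ev a + ev d)
  (ev_c : ev c = ev a * ev d - Q) (ev_V : V = ev a' + ev d')
  (ev_c' : ev c' = ev d' * ev a' - Q^-1)
  (ev_g : ev g = ev d * Q^-1 * ev a' - Q^-1).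
Hypotheses (ev_y0 : ev (cert_y0 C) = Y 0)
  (ev_z0 : ev (cert_z0 C) = Y 1 - Y 0 * ev a)
  (ev_z0' : ev (cert_z0' C) = Y 1 - ev a' * Y 0)
  (ev_e0 : ev (cert_e0 C) = (Y 1 - Y 0 * ev a) * Q^-1 * Y 0 - 1).

Lemma cert_state_eval n :
  let s := cert_state n in
  [/\ ev (st_y s) = Y n, ev (st_z s) = Y n.+1 - Y n * ev a,
      ev (st_z' s) = Y n.+1 - ev a' * Y n &
      ev (st_e s) = (Y n.+1 - Y n * ev a) * Q^-1 * Y n - 1].
Proof.
elim: n => [|n IHn] //=; case: (cert_state n) IHn => y0 z0 z0' e0 /= [hy hz hz' he].
rewrite !(eval_posLaurentD, eval_posLaurentM) ev_qi hy hz hz' he; split.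
- by nc_ring.
- by rewrite Y_right ev_W ev_c; nc_ring.
- by rewrite Y_left ev_V ev_c'; nc_ring.
- by rewrite Y_right ev_W ev_c ev_g; nc_ring.
Qed.

Lemma cert_even_eval n : ev (cert_even n) = Y n.
Proof. by case: (cert_state_eval n). Qed.

Lemma cert_odd_eval n : ev (cert_odd n) = Y n.+1 * Q^-1 * Y n - 1.
Proof.
rewrite /cert_odd; case: (cert_state_eval n) => hy hz _ he.
by rewrite !(eval_posLaurentD, eval_posLaurentM) ev_qi hy he; nc_ring.
Qed.
End CertificateEval.
End Certificate.

Definition psum (ws : seq word) : posLaurent := [seq (1%N, w) | w <- ws].

(* Positivity certificates for the even terms, started from [(e 0, o 0)] and
   from [(o (-1), e 0)] respectively; [X], [Y] are the two initial terms. *)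
Definition base_even_cert := {|
  cert_a := psum [:: [:: LXinv; LXinv; LY]];
  cert_d := psum [:: [:: LXinv; LYinv; LXinv; LY]; [:: LYinv; LXinv; LXinv; LY];
                     [:: LYinv; LXinv; LYinv; LXinv; LY];
                     [:: LYinv; LX; LX; LX; LYinv; LXinv; LY]];
  cert_c := psum [:: [:: LXinv; LXinv; LXinv; LXinv; LY];
                     [:: LXinv; LXinv; LXinv; LYinv; LXinv; LY];
                     [:: LXinv; LXinv; LY; LXinv; LYinv; LXinv; LY]];
  cert_a' := psum [:: [:: LXinv; LY; LXinv]];
  cert_d' := psum [:: [:: LXinv; LXinv]; [:: LYinv; LXinv; LXinv];
                      [:: LYinv; LXinv; LY; LXinv]; [:: LYinv; LX; LX]];
  cert_c' := psum [:: [:: LXinv; LXinv; LXinv; LY; LXinv];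
                      [:: LYinv; LXinv; LXinv; LXinv; LY; LXinv];
                      [:: LYinv; LXinv; LY; LXinv; LXinv; LY; LXinv]];
  cert_g := psum [:: [:: LXinv; LXinv; LXinv; LY; LXinv];
                     [:: LYinv; LXinv; LXinv; LXinv; LY; LXinv];
                     [:: LYinv; LXinv; LY; LXinv; LXinv; LY; LXinv]];
  cert_qinv := psum [:: [:: LYinv; LX; LY; LXinv]];
  cert_y0 := psum [:: [:: LX]];
  cert_z0 := psum [:: [:: LYinv; LXinv; LY]];
  cert_z0' := psum [:: [:: LYinv; LXinv; LY]];
  cert_e0 := [::] |}.

Definition base_odd_cert := {|
  cert_a := psum [:: [:: LY; LXinv; LY]];
  cert_d := psum [:: [:: LYinv; LYinv; LYinv; LXinv; LY];
                     [:: LYinv; LYinv; LX; LYinv; LXinv; LY];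
                     [:: LYinv; LX; LYinv; LYinv; LXinv; LY];
                     [:: LYinv; LX; LYinv; LX; LYinv; LXinv; LY]];
  cert_c := psum [:: [:: LYinv; LXinv; LY]; [:: LY; LXinv; LYinv; LYinv; LXinv; LY];
                     [:: LY; LXinv; LYinv; LX; LYinv; LXinv; LY]];
  cert_a' := psum [:: [:: LY; LY; LXinv]];
  cert_d' := psum [:: [:: LYinv; LYinv]; [:: LYinv; LYinv; LXinv];
                      [:: LYinv; LX; LYinv]; [:: LYinv; LX; LYinv; LXinv]];
  cert_c' := psum [:: [:: LXinv]; [:: LYinv; LYinv; LXinv; LY; LY; LXinv];
                      [:: LYinv; LX; LYinv; LXinv; LY; LY; LXinv]];
  cert_g := psum [:: [:: LXinv]; [:: LYinv; LYinv; LXinv; LY; LY; LXinv];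
                     [:: LYinv; LX; LYinv; LXinv; LY; LY; LXinv]];
  cert_qinv := psum [:: [:: LYinv; LX; LY; LXinv]];
  cert_y0 := psum [:: [:: LY]];
  cert_z0 := psum [:: [:: LYinv; LYinv; LXinv; LY]; [:: LYinv; LX; LYinv; LXinv; LY]];
  cert_z0' := psum [:: [:: LYinv; LYinv; LXinv; LY]; [:: LYinv; LX; LYinv; LXinv; LY]];
  cert_e0 := psum [:: [:: LYinv; LXinv; LY]] |}.

(* The even and odd terms [e n = R (2 n)], [o n = R (2 n + 1)] of a solution. *)
Definition interlaced {A : unitRingType} (e o : int -> A) : Prop :=
  [/\ forall n, e n \is a GRing.unit, forall n, o n \is a GRing.unit,
      forall n, e (n + 1) * (o n)^-1 * e n * o n = 1 + o n &
      forall n, o (n + 1) * (e (n + 1))^-1 * o n * e (n + 1) = 1 + e (n + 1) ^+ 4].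

Section Interlaced.
Context {A : unitRingType} {e o : int -> A}.
Hypothesis eo : interlaced e o.

Let e_unit n : e n \is a GRing.unit. Proof. by case: eo. Qed.
Let o_unit n : o n \is a GRing.unit. Proof. by case: eo. Qed.
Let exchange_o n : e (n + 1) * (o n)^-1 * e n * o n = 1 + o n.
Proof. by case: eo. Qed.
Let exchange_e n :
  o (n + 1) * (e (n + 1))^-1 * o n * e (n + 1) = 1 + e (n + 1) ^+ 4.
Proof. by case: eo. Qed.

Let comm_o n : GRing.comm (1 + o n) (o n). Proof. by rewrite /GRing.comm; nc_ring. Qed.
Let comm_e n : GRing.comm (1 + e n ^+ 4) (e n). Proof. by rewrite /GRing.comm; nc_ring. Qed.

Local Notation Q := (qcomm (e 0) (o 0)).

Let qcomm_exchange_o n : qcomm (o n) (e (n + 1)) = qcomm (e n) (o n).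
Proof. exact: qcomm_exchange (e_unit _) (o_unit _) (e_unit _) (comm_o n) (exchange_o n). Qed.

Let qcomm_exchange_e n :
  qcomm (e (n + 1)) (o (n + 1)) = qcomm (o n) (e (n + 1)).
Proof.
exact: qcomm_exchange (o_unit _) (e_unit _) (o_unit _) (comm_e _) (exchange_e n).
Qed.

Lemma qcomm_e n : qcomm (e n) (o n) = Q.
Proof.
move: n; apply: int_succ_const => n.
by rewrite qcomm_exchange_e qcomm_exchange_o.
Qed.

Lemma qcomm_o n : qcomm (o n) (e (n + 1)) = Q.
Proof. by rewrite qcomm_exchange_o qcomm_e. Qed.

Lemma e_next n : e (n + 1) = (1 + o n) * (e n)^-1 * Q.
Proof. by rewrite -(qcomm_e n); apply: exchange_next (exchange_o n). Qed.

Lemma e_prev n : e n = Q * (e (n + 1))^-1 * (1 + o n).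
Proof. by rewrite -(qcomm_o n); apply: exchange_prev (comm_o n) (exchange_o n). Qed.

Lemma o_next n : o (n + 1) = (1 + e (n + 1) ^+ 4) * (o n)^-1 * Q.
Proof. by rewrite -(qcomm_o n); apply: exchange_next (exchange_e n). Qed.

Lemma o_prev n : o n = Q * (o (n + 1))^-1 * (1 + e (n + 1) ^+ 4).
Proof.
by rewrite -(qcomm_e (n + 1)); apply: exchange_prev (comm_e _) (exchange_e n).
Qed.

Lemma o_mid n : o n = e (n + 1) * Q^-1 * e n - 1.
Proof. by rewrite -(qcomm_e n); apply: exchange_mid (exchange_o n). Qed.

Local Notation W := (Wcoef (e 0) (o 0) (e 1) Q).
Local Notation V := (Vcoef (e 0) (o 0) (e 1) Q).

Local Ltac solve_window :=
  first [ exact: e_unit | exact: o_unit | exact: e_next | exact: e_prev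
        | exact: o_next | exact: o_prev | exact: (esym (qcomm_o _))
        | exact: (esym (qcomm_e _)) ].

Lemma Wcoef_const n : Wcoef (e n) (o n) (e (n + 1)) Q = W.
Proof. by move: n; apply: int_succ_const => n; apply: Wcoef_step; solve_window. Qed.

Lemma Vcoef_const n : Vcoef (e n) (o n) (e (n + 1)) Q = V.
Proof. by move: n; apply: int_succ_const => n; apply: Vcoef_step; solve_window. Qed.

Lemma e_right_rec n : e (n + 1 + 1) = e (n + 1) * W - e n * Q.
Proof. by rewrite -(Wcoef_const n); apply: window_right_rec; solve_window. Qed.

Lemma e_left_rec n : e (n + 1 + 1) = Q^-1 * V * e (n + 1) - Q^-1 * e n.
Proof. by rewrite -(Vcoef_const n); apply: window_left_rec; solve_window. Qed.

Let Q_unit : Q \is a GRing.unit. Proof. exact: qcomm_unit. Qed.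

Let e_nat_right (k : nat) : e k.+2 = e k.+1 * W - e k * Q.
Proof. by have := e_right_rec k; rewrite -!PoszD !addn1. Qed.

Let e_nat_left (k : nat) : e k.+2 = Q^-1 * V * e k.+1 - Q^-1 * e k.
Proof. by have := e_left_rec k; rewrite -!PoszD !addn1. Qed.

Let o_nat (k : nat) : o k = e k.+1 * Q^-1 * e k - 1.
Proof. by have := o_mid k; rewrite -PoszD addn1. Qed.

Local Ltac unfold_eval :=
  rewrite /eval_posLaurent /eval_word /= ?big_cons ?big_nil /=;
  rewrite -?[e 0%:Z]/(e 0) -?[e 1%:Z]/(e 1).

Local Ltac close_eval := rewrite ?invr_qcomm // /Wcoef /Vcoef /qcomm; nc_ring.

Local Ltac apply_cert :=
  rewrite o_nat; split; apply/esym;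
  [ apply: (cert_even_eval _ (fun k : nat => e k) Q_unit e_nat_right e_nat_left)
  | apply: (cert_odd_eval _ (fun k : nat => e k) Q_unit e_nat_right e_nat_left) ].

Lemma even_base_eval (k : nat) :
  e k = eval_posLaurent (e 0) (o 0) (cert_even base_even_cert k) /\
  o k = eval_posLaurent (e 0) (o 0) (cert_odd base_even_cert k).
Proof.
have e1 : e 1 = (1 + o 0) * (e 0)^-1 * Q := e_next 0.
have ue0 := e_unit 0; have uo0 := o_unit 0.
by apply_cert; unfold_eval; rewrite ?e1; close_eval.
Qed.

Lemma odd_base_eval (k : nat) :
  e k = eval_posLaurent (o (-1)) (e 0) (cert_even base_odd_cert k) /\
  o k = eval_posLaurent (o (-1)) (e 0) (cert_odd base_odd_cert k).
Proof.
pose q := qcomm (o (-1)) (e 0).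
have hQ : Q = q := esym (qcomm_o (-1)).
have hW : W = Wcoef (e (-1)) (o (-1)) (e 0) q by rewrite -hQ -(Wcoef_const (-1)).
have hV : V = Vcoef (e (-1)) (o (-1)) (e 0) q by rewrite -hQ -(Vcoef_const (-1)).
have e1 : e 1 = (1 + o 0) * (e 0)^-1 * q by rewrite -hQ; exact: e_next 0.
have o0 : o 0 = (1 + e 0 ^+ 4) * (o (-1))^-1 * q by rewrite -hQ; exact: o_next (-1).
have em1 : e (-1) = q * (e 0)^-1 * (1 + o (-1)) by rewrite -hQ; exact: e_prev (-1).
have ue0 := e_unit 0; have uom1 := o_unit (-1).
by apply_cert; unfold_eval; rewrite ?hW ?hV ?hQ ?e1 ?o0 ?em1 /q; close_eval.
Qed.

End Interlaced.

Definition solution {A : unitRingType} (R : int -> A) : Prop :=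
  [/\ forall k, R k \is a GRing.unit,
      forall k : int,
        R (2 * k) * (R (2 * k - 1))^-1 * R (2 * k - 2) * R (2 * k - 1)
        = 1 + R (2 * k - 1) &
      forall k : int,
        R (2 * k + 1) * (R (2 * k))^-1 * R (2 * k - 1) * R (2 * k)
        = 1 + R (2 * k) ^+ 4].

Definition pos_expressible (i n : int) : Prop :=
  exists P : posLaurent, forall (A : unitRingType) (R : int -> A),
    solution R -> R n = eval_posLaurent (R i) (R (i + 1)) P.

Section Solution.
Context {A : unitRingType} {R : int -> A}.
Hypothesis solR : solution R.

Lemma interlaced_solution :
  interlaced (fun n => R (2 * n)) (fun n => R (2 * n + 1)).
Proof.
case: solR => Ru Ro Re; split=> n //.
- have := Ro (n + 1).
  have -> : 2 * (n + 1) - 1 = 2 * n + 1 by lia.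
  by have -> : 2 * (n + 1) - 2 = 2 * n by lia.
- by have := Re (n + 1); have -> : 2 * (n + 1) - 1 = 2 * n + 1 by lia.
Qed.

Lemma solution_shift (t : int) : solution (fun j => R (j + 2 * t)).
Proof.
case: solR => Ru Ro Re; split=> k //.
- have := Ro (k + t).
  have -> : 2 * (k + t) - 1 = 2 * k - 1 + 2 * t by lia.
  have -> : 2 * (k + t) - 2 = 2 * k - 2 + 2 * t by lia.
  by have -> : 2 * (k + t) = 2 * k + 2 * t by lia.
- have := Re (k + t).
  have -> : 2 * (k + t) + 1 = 2 * k + 1 + 2 * t by lia.
  have -> : 2 * (k + t) - 1 = 2 * k - 1 + 2 * t by lia.
  by have -> : 2 * (k + t) = 2 * k + 2 * t by lia.
Qed.

(* Products of [A^c] unfold to right-nested products of [A], hence the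
   [mulrA] rewrites below. *)
Lemma solution_rev : solution (fun j => (R (- j) : A^c)).
Proof.
case: solR => Ru Ro Re; split=> k //=.
- have := Ro (1 - k).
  have -> : 2 * (1 - k) - 1 = - (2 * k - 1) by lia.
  have -> : 2 * (1 - k) - 2 = - (2 * k) by lia.
  have -> : 2 * (1 - k) = - (2 * k - 2) by lia.
  move=> exch; have fb : GRing.comm (1 + R (- (2 * k - 1))) (R (- (2 * k - 1))).
    by rewrite /GRing.comm; nc_ring.
  have h := exchange_rev (Ru _) fb exch; rewrite -!mulrA in h; exact: h.
- have := Re (- k).
  have -> : 2 * - k + 1 = - (2 * k - 1) by lia.
  have -> : 2 * - k - 1 = - (2 * k + 1) by lia.
  have -> : 2 * - k = - (2 * k) by lia.
  move=> exch; have fb : GRing.comm (1 + R (- (2 * k)) ^+ 4) (R (- (2 * k))).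
    by rewrite /GRing.comm; nc_ring.
  have h := exchange_rev (Ru _) fb exch; rewrite -!mulrA in h.
  by rewrite revrX; exact: h.
Qed.
End Solution.

Lemma pos_expressible_shift (t : int) [i n : int] :
  pos_expressible i n -> pos_expressible (i + 2 * t) (n + 2 * t).
Proof.
case=> P HP; exists P => A R solR.
by have /= := HP A _ (solution_shift solR t); rewrite addrAC.
Qed.

Lemma pos_expressible_rev [i n : int] :
  pos_expressible i n -> pos_expressible (- i - 1) (- n).
Proof.
case=> P HP; exists (mirror P) => A R solR.
rewrite subrK -opprD -eval_posLaurent_conv.
exact: HP _ _ (solution_rev solR).
Qed.

Lemma pos_expressible_nat (i : int) (C : certificate) :
  (forall (A : unitRingType) (R : int -> A), solution R -> forall k : nat,
     R (2 * k) = eval_posLaurent (R i) (R (i + 1)) (cert_even C k) /\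
     R (2 * k + 1) = eval_posLaurent (R i) (R (i + 1)) (cert_odd C k)) ->
  forall k : nat, pos_expressible i k.
Proof.
move=> evalC k; have -> : k = 2 * k./2 + odd k :> int.
  by have := odd_double_half k; lia.
exists (if odd k then cert_odd C k./2 else cert_even C k./2) => A R solR.
by case: (evalC A R solR k./2) => ev_e ev_o; case: (odd k); rewrite ?addr0.
Qed.

Lemma pos_expressible0_nat (k : nat) : pos_expressible 0 k.
Proof.
apply: (pos_expressible_nat _ base_even_cert) => A R solR {}k.
exact: even_base_eval (interlaced_solution solR) k.
Qed.

Lemma pos_expressibleN1_nat (k : nat) : pos_expressible (-1) k.
Proof.
apply: (pos_expressible_nat _ base_odd_cert) => A R solR {}k.
exact: odd_base_eval (interlaced_solution solR) k.
Qed.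

Lemma pos_expressible0 (n : int) : pos_expressible 0 n.
Proof.
case: n => k; first exact: pos_expressible0_nat.
exact: pos_expressible_rev (pos_expressibleN1_nat k.+1).
Qed.

Lemma pos_expressibleN1 (n : int) : pos_expressible (-1) n.
Proof.
case: n => k; first exact: pos_expressibleN1_nat.
exact: pos_expressible_rev (pos_expressible0_nat k.+1).
Qed.

Lemma pos_expressible_all (i n : int) : pos_expressible i n.
Proof.
have [m [->|->]] : exists m, i = 2 * m \/ i = 2 * m - 1.
  by exists ((i + 1) %/ 2)%Z; lia.
- by have := pos_expressible_shift m (pos_expressible0 (n - 2 * m)); rewrite add0r subrK.
- by have := pos_expressible_shift m (pos_expressibleN1 (n - 2 * m)); rewrite subrK addrC.
Qed.

Theorem mainTheorem13 :
  forall n i : int, exists P : posLaurent,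
  forall (A : unitRingType) (R : int -> A),
    (forall k, R k \is a GRing.unit) ->
    (forall k : int,
        R (2 * k) * (R (2 * k - 1))^-1 * R (2 * k - 2) * R (2 * k - 1)
        = 1 + R (2 * k - 1)) ->
    (forall k : int,
        R (2 * k + 1) * (R (2 * k))^-1 * R (2 * k - 1) * R (2 * k)
        = 1 + R (2 * k) ^+ 4) ->
    R n = eval_posLaurent (R i) (R (i + 1)) P.
Proof.
move=> n i; have [P HP] := pos_expressible_all i n.
by exists P => A R Ru Ro Re; apply: HP.
Qed.
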